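(* Let $X,Y,Z\in\mathbb{Z}[i]$ satisfy $X^2+Y^2=Z^2$, $\gcd(X,Y)\in U$, $XYZ\neq 0$, with $X,Z\in O^I$ and $Y\in (1+i)^2G$ (i.e. $Y=(1+i)^{2}W$ with $W\in G$). Then there exist an integer $t$ with $0\le t\le 3$ and $P,Q\in G$ with $\gcd(P,Q)=1$ and $PQ\equiv 0 \pmod{1+i}$ such that $$X=i^{t+1}\big(P^2-(-1)^tQ^2\big),\quad Y=(1+i)^2PQ,\quad Z=i^{t+1}\big(P^2+(-1)^tQ^2\big).$$
   Context: $\mathbb{Z}[i]$ is the ring of Gaussian integers, $U=\{1,-1,i,-i\}$ its unit group; $R(\alpha),I(\alpha)$ are real and imaginary parts. $\gcd(x,y)\in U$ means $x,y$ have no common non-unit divisor; for $P,Q\in G$, $\gcd(P,Q)=1$ means $P,Q$ have no common prime factor. $O=\{\alpha: R(\alpha)+I(\alpha)\equiv1\pmod 2\}$, $O^I=\{\alpha\in O: R(\alpha)\equiv 1\pmod 4\}$. $G$ is the set of Gaussian integers of the form $(1+i)^{a_1}p_2^{a_2}\cdots p_m^{a_m}$ with integers $a_j\ge 0$ and $p_2,\dots,p_m$ distinct Gaussian primes lying in $O^I$ (the empty product $1$ included). *)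

From HB Require Import structures.
From mathcomp Require Import all_boot all_order all_algebra.
From mathcomp Require Import ring.
Set Implicit Arguments. Unset Strict Implicit. Unset Printing Implicit Defensive.
Import Order.TTheory GRing.Theory Num.Theory.
Local Open Scope ring_scope.

Record gint := GInt { gre : int; gim : int }.

Definition gint_to (z : gint) : int * int := (gre z, gim z).
Definition gint_of (p : int * int) : gint := GInt p.1 p.2.
Lemma gint_toK : cancel gint_to gint_of. Proof. by case. Qed.

HB.instance Definition _ := Equality.copy gint (can_type gint_toK).
HB.instance Definition _ := Choice.copy gint (can_type gint_toK).
HB.instance Definition _ := Countable.copy gint (can_type gint_toK).

Definition gzero := GInt 0 0.
Definition gone := GInt 1 0.
Definition gadd (x y : gint) := GInt (gre x + gre y) (gim x + gim y).
Definition gopp (x : gint) := GInt (- gre x) (- gim x).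
Definition gmul (x y : gint) :=
  GInt (gre x * gre y - gim x * gim y) (gre x * gim y + gim x * gre y).

Lemma gaddA : associative gadd.
Proof. by move=> [a b] [c d] [e f]; rewrite /gadd /= !addrA. Qed.
Lemma gaddC : commutative gadd.
Proof. by move=> [a b] [c d]; rewrite /gadd /= addrC [b + _]addrC. Qed.
Lemma gadd0 : left_id gzero gadd.
Proof. by move=> [a b]; rewrite /gadd /= !add0r. Qed.
Lemma gaddN : left_inverse gzero gopp gadd.
Proof. by move=> [a b]; rewrite /gadd /= !addNr. Qed.

HB.instance Definition _ := GRing.isZmodule.Build gint gaddA gaddC gadd0 gaddN.

Lemma gmulA : associative gmul.
Proof. by move=> [a b] [c d] [e f]; rewrite /gmul /=; congr GInt; ring. Qed.
Lemma gmulC : commutative gmul.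
Proof. by move=> [a b] [c d]; rewrite /gmul /=; congr GInt; ring. Qed.
Lemma gmul1 : left_id gone gmul.
Proof. by move=> [a b]; rewrite /gmul /=; congr GInt; ring. Qed.
Lemma gmulD : left_distributive gmul gadd.
Proof. by move=> [a b] [c d] [e f]; rewrite /gmul /gadd /=; congr GInt; ring. Qed.
Lemma gone_neq0 : gone != gzero. Proof. by []. Qed.

HB.instance Definition _ :=
  GRing.Zmodule_isComNzRing.Build gint gmulA gmulC gmul1 gmulD gone_neq0.

Definition gI : gint := GInt 0 1.

Definition gdvd (d x : gint) : Prop := exists k : gint, x = d * k.

(* units U = {1,-1,i,-i}: the divisors of 1 *)
Definition gunit (u : gint) : Prop := gdvd u 1.

Definition gprime (p : gint) : Prop :=
  p <> 0 /\ ~ gunit p /\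
  forall a b : gint, gdvd p (a * b) -> gdvd p a \/ gdvd p b.

(* gcd(x,y) in U: every common divisor is a unit *)
Definition gcd_unit (x y : gint) : Prop :=
  forall d : gint, gdvd d x -> gdvd d y -> gunit d.

Definition inO (a : gint) : Prop := ((gre a + gim a) %% 2)%Z = 1.
Definition inOI (a : gint) : Prop := inO a /\ (gre a %% 4)%Z = 1.

Definition inG (x : gint) : Prop :=
  exists (a1 : nat) (s : seq (gint * nat)),
    uniq (map fst s) /\
    (forall pa, pa \in s -> gprime pa.1 /\ inOI pa.1) /\
    x = (1 + gI) ^+ a1 * \prod_(pa <- s) pa.1 ^+ pa.2.

(* gcd(P,Q) = 1 for P,Q in G: no common prime factor *)
Definition no_common_prime (P Q : gint) : Prop :=
  ~ exists p : gint, gprime p /\ gdvd p P /\ gdvd p Q.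

(* Since X and Z are congruent to 1 mod 2, (1 + i)^2 = 2i divides Z + X and
   Z - X; the quotients M and N satisfy X = i(M - N), Z = i(M + N) and
   M N = W^2.  A prime dividing M and N divides X and Z, hence Y, so M and N
   are coprime, and the prime-power factors of W^2 split between them:
   M = a P^2 and N = b Q^2 with P Q = W and a b = 1.  The unit a is some i^t,
   which forces b = (-1)^t i^t.  Finally 1 + i divides P Q, for otherwise
   a P^2 and b Q^2 would both be odd and their difference -i X even. *)

From HB Require Import structures.
From mathcomp Require Import all_boot all_order all_algebra zify ring.
From Stdlib Require Import Classical.
Set Implicit Arguments. Unset Strict Implicit. Unset Printing Implicit Defensive.
Import GRing.Theory Num.Theory.
Local Open Scope ring_scope.

Local Notation gpi := (1 + gI).
Local Notation prodpow s := (\prod_(pa <- s) pa.1 ^+ pa.2).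

Definition gnorm (x : gint) : int := gre x ^+ 2 + gim x ^+ 2.
Definition gconj (x : gint) : gint := GInt (gre x) (- gim x).

Lemma gnormM x y : gnorm (x * y) = gnorm x * gnorm y.
Proof. by case: x y => a b [c d]; rewrite /gnorm /=; ring. Qed.

Lemma gnorm_ge0 x : 0 <= gnorm x.
Proof. by rewrite addr_ge0 ?sqr_ge0. Qed.

Lemma gnorm_eq0 x : (gnorm x == 0) = (x == 0).
Proof.
case: x => a b; rewrite /gnorm /=; apply/eqP/eqP => [h | [-> ->]] //.
by have [-> ->] : a = 0 /\ b = 0 by nia.
Qed.

Definition gunitb : pred gint := fun x => gnorm x == 1.
Definition ginv (x : gint) : gint := if gunitb x then gconj x else x.

Lemma gint_mulVx : {in gunitb, left_inverse 1 ginv *%R}.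
Proof.
move=> x; rewrite unfold_in => ux; rewrite /ginv /gunitb ux.
move: ux; rewrite /gunitb /gnorm /gconj; case: x => a b /= /eqP ab1.
by congr GInt; rewrite /= -?ab1; ring.
Qed.

Lemma gint_unitPl x y : y * x = 1 -> gunitb x.
Proof.
move/(congr1 gnorm); rewrite gnormM (_ : gnorm 1 = 1) //.
move=> /intUnitRing.unitzPl /orP[] // /eqP x_m1.
by have := gnorm_ge0 x; rewrite x_m1.
Qed.

Lemma gint_invr_out : {in [predC gunitb], ginv =1 id}.
Proof. by move=> x; rewrite inE unfold_in /ginv /gunitb => /negPf ->. Qed.

HB.instance Definition _ :=
  GRing.ComNzRing_hasMulInverse.Build gint gint_mulVx gint_unitPl gint_invr_out.

Lemma gint_integral : GRing.integral_domain_axiom gint.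
Proof.
by move=> x y /(congr1 gnorm); rewrite gnormM => /eqP; rewrite mulf_eq0 !gnorm_eq0.
Qed.

HB.instance Definition _ := GRing.ComUnitRing_isIntegral.Build gint gint_integral.

Lemma gunitE u : (u \is a GRing.unit) = (gnorm u == 1). Proof. by []. Qed.

Lemma gdvd_refl x : gdvd x x.
Proof. by exists 1; rewrite mulr1. Qed.

Lemma gdvd_mulr d a b : gdvd d a -> gdvd d (a * b).
Proof. by move=> [k ->]; exists (k * b); rewrite mulrA. Qed.

Lemma gdvd_mull d a b : gdvd d b -> gdvd d (a * b).
Proof. by rewrite mulrC; apply: gdvd_mulr. Qed.

Lemma gdvd_trans a b c : gdvd a b -> gdvd b c -> gdvd a c.
Proof. by move=> [k ->] [l ->]; exists (k * l); rewrite mulrA. Qed.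

Lemma gdvd_add d a b : gdvd d a -> gdvd d b -> gdvd d (a + b).
Proof. by move=> [k ->] [l ->]; exists (k + l); rewrite mulrDr. Qed.

Lemma gdvd_sub d a b : gdvd d a -> gdvd d b -> gdvd d (a - b).
Proof. by move=> [k ->] [l ->]; exists (k - l); rewrite mulrBr. Qed.

Lemma gunitP u : gunit u <-> u \is a GRing.unit.
Proof.
split=> [[k /esym uk] | /unitrPr [k uk]]; last by exists k.
by apply/unitrPr; exists k.
Qed.

Lemma gprime_neq0 p : gprime p -> p != 0.
Proof. by case=> /eqP. Qed.

Lemma gprime_dvd_exp p x n : gprime p -> gdvd p (x ^+ n) -> gdvd p x.
Proof.
move=> [_ [p_nunit p_dvd_mul]]; elim: n => [|n IHn]; first by rewrite expr0 => /p_nunit.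
by rewrite exprS => /p_dvd_mul [|/IHn].
Qed.

Lemma gprime_exp_dvd_mul p n M N :
  gprime p -> ~ gdvd p N -> gdvd (p ^+ n) (M * N) -> gdvd (p ^+ n) M.
Proof.
move=> p_prime pN; have [_ [_ p_dvd_mul]] := p_prime.
elim: n M => [|n IHn] M.
  by move=> _; exists M; rewrite expr0 mul1r.
rewrite exprS => pnMN.
have [|[M1 eM]|//] := p_dvd_mul M N; first by apply: gdvd_trans pnMN; exists (p ^+ n).
have /(IHn M1) [k eM1] : gdvd (p ^+ n) (M1 * N).
  case: pnMN => k; rewrite eM -mulrA -mulrA => /(mulfI (gprime_neq0 p_prime)) ek.
  by exists k.
by exists k; rewrite eM eM1 mulrA.
Qed.

Lemma no_common_primeC M N : no_common_prime M N -> no_common_prime N M.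
Proof. by move=> MN [p [p_prime [pN pM]]]; apply: MN; exists p. Qed.

Lemma no_common_prime_dvd M' N' M N :
  gdvd M' M -> gdvd N' N -> no_common_prime M N -> no_common_prime M' N'.
Proof.
move=> M'M N'N MN [p [p_prime [pM' pN']]]; apply: MN; exists p.
by split=> //; split; [apply: gdvd_trans M'M | apply: gdvd_trans N'N].
Qed.

Lemma gprime_exp_dvd_coprime_mul p n M N :
  gprime p -> no_common_prime M N -> gdvd (p ^+ n) (M * N) ->
  gdvd (p ^+ n) M \/ gdvd (p ^+ n) N.
Proof.
move=> p_prime MN pnMN; have [pN|pN] := classic (gdvd p N).
  have pnNM : gdvd (p ^+ n) (N * M) by rewrite mulrC.
  right; apply: (gprime_exp_dvd_mul p_prime _ pnNM) => pM.
  by apply: MN; exists p.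
by left; apply: gprime_exp_dvd_mul p_prime pN pnMN.
Qed.

Lemma no_common_prime_mul_sqr (s : seq (gint * nat)) M N R :
  (forall pa, pa \in s -> gprime pa.1) -> no_common_prime M N ->
  M * N = R * prodpow s ^+ 2 ->
  exists s1 s2 a b, [/\ perm_eq (s1 ++ s2) s, M = a * prodpow s1 ^+ 2,
                        N = b * prodpow s2 ^+ 2 & a * b = R].
Proof.
elim: s M N => [|[p e] s IHs] M N s_prime MN.
  rewrite big_nil expr1n mulr1 => <-.
  by exists [::], [::], M, N; rewrite big_nil expr1n !mulr1.
have p_prime : gprime p := s_prime _ (mem_head _ _).
have {}s_prime pa : pa \in s -> gprime pa.1.
  by move=> spa; apply: s_prime; rewrite inE spa orbT.
rewrite big_cons /= exprMn -exprM mulrCA => eMN.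
have pMN : gdvd (p ^+ (e * 2)) (M * N) by rewrite eMN; exists (R * prodpow s ^+ 2).
wlog [M1 eM] : M N MN eMN pMN / gdvd (p ^+ (e * 2)) M.
  move=> wlog_M; have [/wlog_M|pN] := gprime_exp_dvd_coprime_mul p_prime MN pMN.
    exact.
  rewrite mulrC in eMN pMN.
  have [s2 [s1 [b [a [perm21 eN eM ba]]]]] :=
    wlog_M N M (no_common_primeC MN) eMN pMN pN.
  exists s1, s2, a, b; split=> //; [by rewrite perm_catC | by rewrite mulrC].
have MN1 : no_common_prime M1 N.
  by apply: no_common_prime_dvd MN; [rewrite eM; apply/gdvd_mull/gdvd_refl | apply: gdvd_refl].
have eM1N : M1 * N = R * prodpow s ^+ 2.
  by apply: (mulfI (expf_neq0 (e * 2) (gprime_neq0 p_prime))); rewrite mulrA -eM.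
have [s1 [s2 [a [b [perm12 eM1 eN ab]]]]] := IHs M1 N s_prime MN1 eM1N.
exists ((p, e) :: s1), s2, a, b; split=> //; first by rewrite cat_cons perm_cons.
by rewrite eM eM1 big_cons /= exprMn -exprM mulrCA.
Qed.

Lemma gpi_dvdP x : gdvd gpi x <-> ((gre x + gim x) %% 2 = 0)%Z.
Proof.
case: x => a b /=; split=> [[[c d]] [-> ->] | ab_even]; first lia.
by exists (GInt ((a + b) %/ 2)%Z ((b - a) %/ 2)%Z); congr GInt; rewrite /=; lia.
Qed.

Lemma gpi_prime : gprime gpi.
Proof.
split=> //; split; first by move/gpi_dvdP.
by move=> [a b] [c d]; rewrite !gpi_dvdP /=; nia.
Qed.

Lemma inO_ndvd_gpi x : inO x -> ~ gdvd gpi x.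
Proof. by rewrite /inO gpi_dvdP => ->. Qed.

Lemma gpi_dvd_sub_odd x y : ~ gdvd gpi x -> ~ gdvd gpi y -> gdvd gpi (x - y).
Proof. by rewrite !gpi_dvdP; case: x y => a b [c d] /=; lia. Qed.

Lemma gpi_sqr : gpi ^+ 2 = gI *+ 2.
Proof. by []. Qed.

Lemma gpi_sqr_dvd x : (gre x %% 2 = 0)%Z -> (gim x %% 2 = 0)%Z -> gdvd (gpi ^+ 2) x.
Proof.
case: x => a b /= a_even b_even.
by exists (GInt (b %/ 2)%Z (- (a %/ 2)%Z)); congr GInt; rewrite /=; lia.
Qed.

Lemma inOI_gpi_sqr_dvd x z :
  inOI x -> inOI z -> gdvd (gpi ^+ 2) (z + x) /\ gdvd (gpi ^+ 2) (z - x).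
Proof.
case: x z => a b [c d] [] /= + + [] /=; rewrite /inO /= => *.
by split; apply: gpi_sqr_dvd => /=; lia.
Qed.

Lemma gunit_expgI u : u \is a GRing.unit -> exists2 t, (t <= 3)%N & u = gI ^+ t.
Proof.
rewrite gunitE /gnorm; case: u => a b /= /eqP ab1.
have [[-> ->]|[[-> ->]|[[-> ->]|[-> ->]]]] :
  (a = 1 /\ b = 0) \/ (a = -1 /\ b = 0) \/ (a = 0 /\ b = 1) \/ (a = 0 /\ b = -1).
  by nia.
- by exists 0%N.
- by exists 2%N.
- by exists 1%N.
- by exists 3%N.
Qed.

Lemma gmul_eq1 a b :
  a * b = 1 -> exists t, [/\ (t <= 3)%N, a = gI ^+ t & b = (-1) ^+ t * gI ^+ t].
Proof.
move=> ab1; have a_unit : a \is a GRing.unit by apply/unitrPr; exists b.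
have [t t_le3 ea] := gunit_expgI a_unit.
exists t; split=> //; apply: (mulrI a_unit).
by rewrite ab1 ea mulrCA -!exprMn (_ : gI * gI * -1 = 1) ?expr1n.
Qed.

(* A factorisation as in [inG], with the power of 1 + i kept as an ordinary
   entry of the list. *)
Definition Gfactorization (s : seq (gint * nat)) : Prop :=
  uniq (map fst s) /\ forall pa, pa \in s -> pa.1 = gpi \/ gprime pa.1 /\ inOI pa.1.

Lemma Gfactorization_prime s : Gfactorization s -> forall pa, pa \in s -> gprime pa.1.
Proof. by move=> [_ s_fact] pa /s_fact [->|[]] //; exact: gpi_prime. Qed.

Lemma Gfactorization_perm_catl s1 s2 s :
  perm_eq (s1 ++ s2) s -> Gfactorization s -> Gfactorization s1.
Proof.
move=> perm12 [s_uniq s_fact]; split.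
  by move: s_uniq; rewrite -(perm_uniq (perm_map fst perm12)) map_cat cat_uniq => /andP[].
by move=> pa s1pa; apply: s_fact; rewrite -(perm_mem perm12) mem_cat s1pa.
Qed.

Lemma inG_Gfactorization x : inG x <-> exists2 s, Gfactorization s & x = prodpow s.
Proof.
split=> [[a [s [s_uniq [s_fact ->]]]] | [s [s_uniq s_fact] ->]].
  exists ((gpi, a) :: s); last by rewrite big_cons.
  split=> [|pa]; last by rewrite inE => /predU1P [->|/s_fact]; [left | right].
  rewrite /= s_uniq andbT; apply/mapP => -[pa /s_fact [_ [pa_odd _]] pa_gpi].
  by move: pa_odd; rewrite /inO -pa_gpi.
have [/mapP [[p a] s_pa /= gpi_p] | gpi_nin] := boolP (gpi \in map fst s).
  subst p; have perm_s := perm_to_rem s_pa.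
  move: s_uniq; rewrite (perm_uniq (perm_map fst perm_s)) /= => /andP [gpi_nin rem_uniq].
  exists a, (rem (gpi, a) s); split=> //; split; last by rewrite (perm_big _ perm_s) big_cons.
  move=> pa pa_rem; have /s_fact [pa_gpi|//] := mem_rem pa_rem.
  by case/negP: gpi_nin; apply/mapP; exists pa.
exists 0%N, s; split=> //; split; last by rewrite expr0 mul1r.
move=> pa spa; have [pa_gpi|//] := s_fact pa spa.
by case/negP: gpi_nin; apply/mapP; exists pa.
Qed.

Lemma gprime_ndvd_unit p u : gprime p -> u \is a GRing.unit -> ~ gdvd p u.
Proof. by move=> [_ [p_nunit _]] /gunitP u_unit pu; apply/p_nunit/(gdvd_trans pu). Qed.

Lemma pythagorean_halves X Y Z W :
  X ^+ 2 + Y ^+ 2 = Z ^+ 2 -> inOI X -> inOI Z -> Y = gpi ^+ 2 * W ->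
  exists M N, [/\ X = gI * (M - N), Z = gI * (M + N) & M * N = W ^+ 2].
Proof.
move=> pyth oX oZ eY; have [[M eM] [N eN]] := inOI_gpi_sqr_dvd oX oZ.
have gpi2_neq0 : gpi ^+ 2 != 0 by [].
exists M, N; split; apply: (mulfI gpi2_neq0).
- by rewrite mulrCA mulrBr -eM -eN gpi_sqr; ring.
- by rewrite mulrCA mulrDr -eM -eN gpi_sqr; ring.
apply: (mulfI gpi2_neq0); transitivity ((Z + X) * (Z - X)); first by rewrite eM eN; ring.
transitivity (Z ^+ 2 - X ^+ 2); first by ring.
by rewrite -pyth eY; ring.
Qed.

Lemma halves_no_common_prime X Y Z M N :
  gcd_unit X Y -> X ^+ 2 + Y ^+ 2 = Z ^+ 2 ->
  X = gI * (M - N) -> Z = gI * (M + N) -> no_common_prime M N.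
Proof.
move=> XY pyth eX eZ [p [p_prime [pM pN]]].
have pX : gdvd p X by rewrite eX; apply/gdvd_mull/gdvd_sub.
have pZ : gdvd p Z by rewrite eZ; apply/gdvd_mull/gdvd_add.
have pY : gdvd p Y.
  apply: (gprime_dvd_exp (n := 2) p_prime).
  rewrite (_ : Y ^+ 2 = Z ^+ 2 - X ^+ 2); first by apply/gdvd_sub; rewrite expr2; apply: gdvd_mulr.
  by rewrite -pyth; ring.
by case: p_prime => _ [p_nunit _]; apply/p_nunit/XY.
Qed.

Lemma gpi_dvd_mul_halves X a b P Q :
  inO X -> X = gI * (a * P ^+ 2 - b * Q ^+ 2) -> a * b = 1 -> gdvd gpi (P * Q).
Proof.
move=> oX eX ab1; apply: NNPP => gpi_nPQ.
have gpi_dvd_unit_sqr c R : c \is a GRing.unit -> gdvd gpi (c * R ^+ 2) -> gdvd gpi R.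
  move=> c_unit /(gpi_prime.2.2) [/(gprime_ndvd_unit gpi_prime c_unit) //|].
  exact: gprime_dvd_exp gpi_prime.
apply: (inO_ndvd_gpi oX); rewrite eX; apply/gdvd_mull/gpi_dvd_sub_odd.
- by move/(gpi_dvd_unit_sqr a) => gpi_P; apply/gpi_nPQ/gdvd_mulr/gpi_P/unitrPr; exists b.
- by move/(gpi_dvd_unit_sqr b) => gpi_Q; apply/gpi_nPQ/gdvd_mull/gpi_Q/unitrPr; exists a; rewrite mulrC.
Qed.

Theorem theorem4p4 (X Y Z : gint) :
  X ^+ 2 + Y ^+ 2 = Z ^+ 2 ->
  gcd_unit X Y ->
  X * Y * Z <> 0 ->
  inOI X -> inOI Z ->
  (exists W : gint, inG W /\ Y = (1 + gI) ^+ 2 * W) ->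
  exists (t : nat) (P Q : gint),
    (t <= 3)%N /\ inG P /\ inG Q /\ no_common_prime P Q /\
    gdvd (1 + gI) (P * Q) /\
    X = gI ^+ t.+1 * (P ^+ 2 - (-1) ^+ t * Q ^+ 2) /\
    Y = (1 + gI) ^+ 2 * (P * Q) /\
    Z = gI ^+ t.+1 * (P ^+ 2 + (-1) ^+ t * Q ^+ 2).
Proof.
(* X Y Z <> 0 is implied by the other hypotheses: X, Z are odd and W is a
   product of primes. *)
move=> pyth XY _ oX oZ [W [GW eY]].
have [M [N [eX eZ eMN]]] := pythagorean_halves pyth oX oZ eY.
have MN := halves_no_common_prime XY pyth eX eZ.
have [s Gs eW] := (inG_Gfactorization W).1 GW.
rewrite eW -[_ ^+ 2]mul1r in eMN.
have [s1 [s2 [a [b [perm12 eM eN ab1]]]]] :=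
  no_common_prime_mul_sqr (Gfactorization_prime Gs) MN eMN.
have [t [t_le3 ea eb]] := gmul_eq1 ab1.
rewrite eM eN in eX eZ; exists t, (prodpow s1), (prodpow s2).
split=> //; split; [|split; [|split; [|split]]].
- by apply/inG_Gfactorization; exists s1 => //; apply: Gfactorization_perm_catl perm12 Gs.
- apply/inG_Gfactorization; exists s2 => //.
  by apply: (@Gfactorization_perm_catl s2 s1) Gs; rewrite perm_catC.
- by apply: no_common_prime_dvd MN; rewrite ?eM ?eN expr2; apply/gdvd_mull/gdvd_mulr/gdvd_refl.
- exact: gpi_dvd_mul_halves (proj1 oX) eX ab1.
rewrite eY eW -(perm_big _ perm12) big_cat /= eX eZ ea eb !exprS.
by split; [|split]; move: (gI ^+ t) ((-1) ^+ t : gint) => g sg; ring.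
Qed.
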